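(* Let $p$ be a complex polynomial of degree at least two. Then every zero of $p'$ belongs to $H_p = \operatorname{conv} J_p$.
   Context: For a polynomial $p$ viewed as a holomorphic self-map of the Riemann sphere $\widehat{\mathbb{C}}$ (with $p(\infty)=\infty$), the Fatou set $F_p$ is the maximal open subset of $\widehat{\mathbb{C}}$ on which the iterates $\{p^{\circ n}\}_{n\in\mathbb{N}}$ form an equicontinuous family, and the Julia set $J_p$ is the complement $\widehat{\mathbb{C}}\setminus F_p$; for polynomials $J_p$ is a nonempty compact subset of $\mathbb{C}$. $\operatorname{conv} X$ denotes the convex hull of $X \subset \mathbb{C}\cong\mathbb{R}^2$. *)

From mathcomp Require Import all_boot all_order all_algebra.
From mathcomp Require Import complex.
From mathcomp Require Import reals.
Set Implicit Arguments. Unset Strict Implicit. Unset Printing Implicit Defensive.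
Import Order.TTheory GRing.Theory Num.Theory.
Local Open Scope ring_scope.
Local Open Scope complex_scope.
Local Open Scope ring_scope.

(* The complex plane is R[i] for a real field R : realType.
   The Riemann sphere is option R[i], with None standing for infinity. *)
Section Dyn.
Variable R : realType.
Local Notation C := (R[i]).

Definition sphere := option C.

Definition modsq (z : C) : R := (complex.Re z) ^+ 2 + (complex.Im z) ^+ 2.

Definition chordal (x y : sphere) : R :=
  match x, y with
  | Some z, Some w => 2 * Num.sqrt (modsq (z - w)) /
                      Num.sqrt ((1 + modsq z) * (1 + modsq w))
  | Some z, None | None, Some z => 2 / Num.sqrt (1 + modsq z)
  | None, None => 0
  end.

Definition poly_sphere (p : {poly C}) (x : sphere) : sphere :=
  match x with Some z => Some p.[z] | None => None end.

Definition iterate (p : {poly C}) (n : nat) : sphere -> sphere :=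
  iter n (poly_sphere p).

Definition sphere_open (U : sphere -> Prop) : Prop :=
  forall x, U x -> exists2 r : R, 0 < r & forall y, chordal x y < r -> U y.

Definition equicontinuous_at (p : {poly C}) (x : sphere) : Prop :=
  forall eps : R, 0 < eps -> exists2 delta : R, 0 < delta &
    forall (n : nat) (y : sphere), chordal x y < delta ->
      chordal (iterate p n x) (iterate p n y) < eps.

Definition fatou (p : {poly C}) (x : sphere) : Prop :=
  exists U : sphere -> Prop, [/\ sphere_open U, U x &
    forall y, U y -> equicontinuous_at p y].

Definition julia (p : {poly C}) (x : sphere) : Prop := ~ fatou p x.

(* Julia set as a subset of C (for polynomials infinity is in the Fatou set) *)
Definition julia_C (p : {poly C}) (z : C) : Prop := julia p (Some z).

Definition conv (X : C -> Prop) (z : C) : Prop :=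
  exists (n : nat) (w : 'I_n -> R) (x : 'I_n -> C),
    [/\ forall i, 0 <= w i, \sum_(i < n) w i = 1, forall i, X (x i) &
        z = \sum_(i < n) (w i)%:C%C * x i].

End Dyn.

From mathcomp Require Import all_boot all_order all_algebra.
From mathcomp Require Import complex.
From mathcomp Require Import boolp classical_sets reals.
From mathcomp Require Import ring lra.
Import Order.TTheory GRing.Theory Num.Theory.
Local Open Scope ring_scope.
Local Open Scope complex_scope.

(* Fix an escape radius M >= 1, i.e. |z| >= M implies |p z| >= 2 |z|, and let
   K = {z | |p^n z| <= M for all n} be the filled Julia set.  Call c a
   boundary point if c is in K and escaping points (points outside K) lie
   arbitrarily close to c.  Then:
   - boundary points are in the Julia set: near c some orbits leave the disc
     of radius 2M while the orbit of c stays in the disc of radius M, so the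
     iterates are not equicontinuous at c (in the chordal metric);
   - boundary points exist: K is closed, so along a segment from a fixed
     point of p to a point outside the disc of radius M the last point of K
     is a boundary point;
   - preimages of boundary points are boundary points, because the roots of
     p - y move continuously with y; hence all the roots of p - c lie in J.
   Since (p - c)' = p', the Gauss-Lucas theorem, proved below from the
   logarithmic derivative, puts every critical point of p in the convex hull
   of the roots of p - c, hence in the convex hull of J. *)

Import Normc.

Section ComplexModulus.
Context {R : realType}.
Implicit Types (x y z w : R[i]) (a : R).

Lemma normc_ge0 z : 0 <= normc z.
Proof. by case: z => u v; exact: sqrtr_ge0. Qed.

Lemma normc_eq0 z : (normc z == 0) = (z == 0).
Proof. by apply/eqP/eqP => [/eq0_normc|->] //; exact: normc0. Qed.

Lemma normc_gt0 z : (0 < normc z) = (z != 0).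
Proof. by rewrite lt_def normc_eq0 normc_ge0 andbT. Qed.

Lemma normcB x y : normc x - normc y <= normc (x - y).
Proof. by have := le_normcD (x - y) y; rewrite subrK; lra. Qed.

Lemma normc_prod (I : Type) (s : seq I) (F : I -> R[i]) :
  normc (\prod_(i <- s) F i) = \prod_(i <- s) normc (F i).
Proof. exact: (big_morph _ (@normcM R) (normc1 R)). Qed.

Lemma normc_real a : normc a%:C = `|a|.
Proof. by rewrite /normc /= expr0n /= addr0 sqrtr_sqr. Qed.

Lemma normcE z : `|z| = (normc z)%:C.
Proof. by case: z. Qed.

Lemma modsqE z : modsq z = normc z ^+ 2.
Proof. by case: z => u v; rewrite /modsq /= sqr_sqrtr // addr_ge0 ?sqr_ge0. Qed.

Lemma sqrt_modsq z : Num.sqrt (modsq z) = normc z.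
Proof. by case: z. Qed.

Lemma sqrt_le_sqr a b : 0 <= b -> a <= b ^+ 2 -> Num.sqrt a <= b.
Proof.
move=> b0 ab; rewrite -(ger0_norm b0) -sqrtr_sqr.
by rewrite ler_sqrt // sqr_ge0.
Qed.

Lemma chordal_le w y : chordal (Some w) (Some y) <= 2 * normc (w - y).
Proof.
rewrite /chordal sqrt_modsq !modsqE.
have D1 : 1 <= Num.sqrt ((1 + normc w ^+ 2) * (1 + normc y ^+ 2)).
  rewrite -{1}sqrtr1 ler_sqrt; last by rewrite mulr_ge0 // addr_ge0 ?sqr_ge0.
  by rewrite mulr_ege1 // lerDl sqr_ge0.
have := normc_ge0 (w - y).
rewrite ler_pdivrMr; [nra | lra].
Qed.

Lemma chordal_ge x y (M : R) : 1 <= M -> normc x <= M -> 2 * M <= normc y ->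
  1 / (2 * (1 + M)) <= chordal (Some x) (Some y).
Proof.
move=> M1 xM yM.
rewrite /chordal sqrt_modsq sqrtrM; last by rewrite addr_ge0 // modsqE sqr_ge0.
set sa := Num.sqrt _; set sb := Num.sqrt _.
have sa_le : sa <= 1 + M.
  apply: sqrt_le_sqr; first lra.
  by rewrite modsqE; have := normc_ge0 x; nra.
have sb_le : sb <= 2 * normc y.
  by apply: sqrt_le_sqr; [lra | rewrite modsqE; nra].
have sa0 : 0 < sa by rewrite sqrtr_gt0 modsqE; have := sqr_ge0 (normc x); lra.
have sb0 : 0 < sb by rewrite sqrtr_gt0 modsqE; have := sqr_ge0 (normc y); lra.
have xy : normc y - M <= normc (x - y).
  by have := normcB y x; rewrite -[x - y]opprB normcN; lra.
have sab : sa * sb <= (1 + M) * (2 * normc y) by apply: ler_pM; lra.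
rewrite ler_pdivlMr ?mulr_gt0 // mul1r ler_pdivrMl; last lra.
nra.
Qed.

End ComplexModulus.

Section ConvexHull.
Context {R : realType}.
Local Notation C := R[i].

Lemma conv_mem (X : C -> Prop) z : X z -> conv X z.
Proof.
move=> Xz; exists 1%N, (fun=> 1), (fun=> z).
split=> //; first by rewrite big_ord1.
by rewrite big_ord1 -[LHS]mul1r.
Qed.

Lemma conv_sub {X Y : C -> Prop} {z : C} : (forall x, X x -> Y x) ->
  conv X z -> conv Y z.
Proof.
by move=> XY [n [w [x [w0 w1 Xx ->]]]]; exists n, w, x; split=> // i; exact: XY.
Qed.

Lemma conv_barycenter (s : seq C) (m : C -> R) z : (0 < size s)%N ->
  (forall r, r \in s -> 0 < m r) -> \sum_(r <- s) (m r)%:C * (z - r) = 0 ->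
  conv [in s] z.
Proof.
move=> s0 m0 bal.
set S := \sum_(r <- s) m r.
have S0 : 0 < S.
  rewrite /S (big_rem _ (mem_nth 0 s0)) /= ltr_pwDl ?m0 ?mem_nth //.
  by rewrite big_seq sumr_ge0 // => r /mem_rem rs; rewrite ltW ?m0.
have S_ord : S = \sum_(i < size s) m (nth 0 s i).
  by rewrite /S (big_nth 0) big_mkord.
have Sz : S%:C * z = \sum_(r <- s) (m r)%:C * r.
  apply/eqP; rewrite -subr_eq0 -[X in _ == X]bal rmorph_sum mulr_suml -sumrB.
  by apply/eqP/eq_bigr => r _; rewrite mulrBr.
exists (size s), (fun i => m (nth 0 s i) / S), (fun i => nth 0 s i); split.
- by move=> i; rewrite divr_ge0 ?ltW ?m0 ?mem_nth.
- by rewrite -mulr_suml -S_ord divff ?gt_eqF.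
- by move=> i; exact: mem_nth.
- apply: (mulfI (x := S%:C)).
    by rewrite -[0]/(0%:C) (inj_eq (@complexI R)) gt_eqF.
  rewrite Sz (big_nth 0) big_mkord mulr_sumr; apply: eq_bigr => i _.
  by rewrite mulrA -rmorphM /= mulrCA divff ?gt_eqF ?mulr1.
Qed.

Lemma deriv_prod_XsubC_horner (s : seq C) z : z \notin s ->
  (\prod_(r <- s) ('X - r%:P))^`().[z] =
  (\prod_(r <- s) (z - r)) * \sum_(r <- s) (z - r)^-1.
Proof.
elim: s => [|a s IH]; first by rewrite !big_nil derivC horner0 mulr0.
rewrite inE negb_or => /andP[za zs].
rewrite !big_cons derivM derivXsubC hornerD !hornerM hornerXsubC IH // hornerC.
rewrite horner_prod (eq_bigr (fun r => z - r) (fun r _ => hornerXsubC r z)).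
have za0 : z - a != 0 by rewrite subr_eq0.
by field.
Qed.

Lemma conjc_invE (u : C) : u != 0 -> (u^-1)^*%C = ((normc u ^+ 2)^-1)%:C * u.
Proof.
move=> u0; rewrite conjc_inv invc_norm normcJ conjcK normcE.
by rewrite -rmorphXn -fmorphV.
Qed.

(* At a zero z of q' which is not a zero of q, the logarithmic derivative
   vanishes: sum_r 1/(z - r) = 0; conjugating gives the balance
   sum_r |z - r|^-2 (z - r) = 0. *)
Theorem gauss_lucas (q : {poly C}) z : (1 < size q)%N ->
  root q^`() z -> conv (root q) z.
Proof.
move=> q1 dqz.
have [rs q_split] := closed_field_poly_normal q.
have lq0 : lead_coef q != 0 by rewrite lead_coef_eq0 -size_poly_eq0 -lt0n ltnW.
have rootE r : root q r = (r \in rs).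
  by rewrite q_split rootZ // root_prod_XsubC.
have [qz|nqz] := boolP (root q z); first exact: conv_mem.
have zs : z \notin rs by rewrite -rootE.
have rs0 : (0 < size rs)%N.
  by move: q1; rewrite q_split size_scale // size_prod_XsubC.
apply: (@conv_sub [in rs]) => [r|]; first by rewrite rootE.
apply: (@conv_barycenter rs (fun r => (normc (z - r) ^+ 2)^-1)) => //.
  move=> r rs_r; rewrite invr_gt0 exprn_gt0 // normc_gt0 subr_eq0.
  by apply: contraNneq zs => ->.
have logder0 : \sum_(r <- rs) (z - r)^-1 = 0.
  move: dqz; rewrite /root q_split derivZ hornerZ deriv_prod_XsubC_horner //.
  rewrite !mulf_eq0 (negbTE lq0) /= => /orP[|/eqP //].
  rewrite prodf_seq_eq0 => /hasP[r rs_r]; rewrite subr_eq0 => /eqP zr.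
  by rewrite zr rs_r in zs.
transitivity ((\sum_(r <- rs) (z - r)^-1)^*%C); last by rewrite logder0 conjc0.
rewrite rmorph_sum; apply: eq_big_seq => r rs_r /=.
by rewrite conjc_invE // subr_eq0; apply: contraNneq zs => ->.
Qed.

End ConvexHull.

Section PolynomialEstimates.
Context {R : realType}.
Local Notation C := R[i].

Lemma prod_ge_pow {T : eqType} {s : seq T} {f : T -> R} {h : R} : 0 <= h ->
  (forall r, r \in s -> h <= f r) -> h ^+ size s <= \prod_(r <- s) f r.
Proof.
move=> h0; elim: s => [|a s IH] hf; first by rewrite big_nil expr0.
rewrite big_cons exprS /= ler_pM ?exprn_ge0 ?hf ?mem_head //.
by apply: IH => r rs; rewrite hf // inE rs orbT.
Qed.

Lemma seq_normc_bound (s : seq C) :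
  exists2 B : R, 0 <= B & forall r, r \in s -> normc r <= B.
Proof.
elim: s => [|a s [B B0 HB]]; first by exists 0.
exists (normc a + B); first by rewrite addr_ge0 ?normc_ge0.
move=> r; rewrite inE => /orP[/eqP->|/HB]; first by rewrite lerDl.
by have := normc_ge0 a; lra.
Qed.

Lemma horner_lipschitz (q : {poly C}) (w : C) : exists2 L : R, 0 < L &
  forall z, normc (z - w) <= 1 -> normc (q.[z] - q.[w]) <= L * normc (z - w).
Proof.
elim/poly_ind: q => [|q c [L L0 HL]].
  by exists 1 => // z _; rewrite !horner0 subrr normc0 mul1r normc_ge0.
exists (L * (normc w + 1) + normc q.[w] + 1).
  by have := normc_ge0 w; have := normc_ge0 q.[w]; nra.
move=> z zw; rewrite !hornerMXaddC.
have -> : q.[z] * z + c - (q.[w] * w + c) =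
          (q.[z] - q.[w]) * z + q.[w] * (z - w) by ring.
apply: (le_trans (le_normcD _ _)); rewrite !normcM.
have qz := HL z zw.
have zB : normc z <= normc w + 1 by have := normcB z w; lra.
have := normc_ge0 z; have := normc_ge0 (z - w); have := normc_ge0 q.[w].
have := normc_ge0 (q.[z] - q.[w]); have := normc_ge0 w.
nra.
Qed.

Lemma horner_continuous (q : {poly C}) (w : C) (eps : R) : 0 < eps ->
  exists2 d : R, 0 < d &
    forall z, normc (z - w) < d -> normc (q.[z] - q.[w]) < eps.
Proof.
move=> e0; have [L L0 HL] := horner_lipschitz q w.
exists (Num.min 1 (eps / L)); first by rewrite lt_min ltr01 divr_gt0.
move=> z; rewrite lt_min => /andP[z1 zL].
apply: (le_lt_trans (HL z (ltW z1))).
by rewrite -ltr_pdivlMl // mulrC.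
Qed.

End PolynomialEstimates.

Section Dynamics.
Context {R : realType}.
Local Notation C := R[i].
Context {p : {poly C}}.
Hypothesis p_deg : (2 < size p)%N.

Lemma lead_coef_p_neq0 : lead_coef p != 0.
Proof. by rewrite lead_coef_eq0 -size_poly_eq0 -lt0n ltnW // ltnW. Qed.

Lemma size_const_lt (c : C) : (size (- c%:P) < size p)%N.
Proof. by rewrite size_polyN (leq_ltn_trans (size_polyC_leq1 c)) // ltnW. Qed.

Lemma size_p_sub_const (c : C) : size (p - c%:P) = size p.
Proof. exact: size_polyDl (size_const_lt c). Qed.

Lemma level_factor (c : C) : exists2 rs : seq C, size rs = (size p).-1 &
  forall w, p.[w] - c = lead_coef p * \prod_(r <- rs) (w - r).
Proof.
have [rs e] := closed_field_poly_normal (p - c%:P).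
rewrite (lead_coefDl (size_const_lt c)) in e; exists rs.
  have := congr1 (fun q : {poly C} => size q) e.
  rewrite /= size_p_sub_const size_scale ?lead_coef_p_neq0 //.
  by rewrite size_prod_XsubC => ->.
move=> w; have := congr1 (horner^~ w) e.
rewrite /= hornerD hornerN hornerC => ->; rewrite hornerZ horner_prod.
by congr (_ * _); apply: eq_bigr => r _; rewrite hornerXsubC.
Qed.

Lemma escape_radius : exists2 M : R, 1 <= M &
  forall z, M <= normc z -> 2 * normc z <= normc p.[z].
Proof.
have [rs rs_size p_prod] := level_factor 0.
have [B B0 HB] := seq_normc_bound rs.
set a := normc (lead_coef p).
have a0 : 0 < a by rewrite normc_gt0 lead_coef_p_neq0.
have a8 : 0 <= 8 / a by rewrite divr_ge0 // ltW.
exists (2 + 2 * B + 8 / a) => [|z zM]; first lra.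
have az8 : 8 <= a * normc z by rewrite -ler_pdivrMl //; lra.
have far r : r \in rs -> normc z / 2 <= normc (z - r).
  by move=> /HB rB; have := normcB z r; lra.
have prod_ge : (normc z / 2) ^+ 2 <= \prod_(r <- rs) normc (z - r).
  have half0 : 0 <= normc z / 2 by rewrite divr_ge0 ?normc_ge0.
  apply: (le_trans _ (prod_ge_pow (f := fun r => normc (z - r)) half0 far)).
  have rs2 : (2 <= size rs)%N by rewrite rs_size -subn1 ltn_subRL.
  rewrite -(subnKC rs2) exprD ler_peMr ?exprn_ge0 //.
  by rewrite exprn_ege1 //; lra.
have := p_prod z; rewrite subr0 => ->; rewrite normcM normc_prod -/a.
have := ler_wpM2l (ltW a0) prod_ge.
have := normc_ge0 z; nra.
Qed.

Lemma root_near (c w : C) (rho : R) : 0 < rho ->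
  normc (p.[w] - c) < normc (lead_coef p) * rho ^+ (size p).-1 ->
  exists2 r, p.[r] = c & normc (r - w) < rho.
Proof.
move=> rho0 pw_c.
have [rs rs_size p_prod] := level_factor c.
have [/hasP[r rs_r r_near] | /hasPn far] :=
  boolP (has (fun r => normc (r - w) < rho) rs).
  exists r => //; apply/eqP; rewrite -subr_eq0 p_prod (big_rem r) //= subrr.
  by rewrite mul0r mulr0.
have prod_ge : rho ^+ size rs <= \prod_(r <- rs) normc (w - r).
  apply: prod_ge_pow (ltW rho0) _ => r /far.
  by rewrite -leNgt -normcN opprB.
move: pw_c; rewrite p_prod normcM normc_prod -rs_size.
have := ler_wpM2l (normc_ge0 (lead_coef p)) prod_ge; lra.
Qed.

Definition piter (n : nat) (z : C) : C := iter n (horner p) z.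

Lemma piterSr n z : piter n.+1 z = piter n p.[z].
Proof. exact: iterSr. Qed.

Lemma iterate_Some n z : iterate p n (Some z) = Some (piter n z).
Proof. by elim: n => //= n; rewrite /iterate => ->. Qed.

Lemma piter_continuous n (w : C) (eps : R) : 0 < eps -> exists2 d : R, 0 < d &
  forall z, normc (z - w) < d -> normc (piter n z - piter n w) < eps.
Proof.
elim: n eps => [|n IH] eps e0; first by exists eps.
have [d1 d10 H1] := horner_continuous p (piter n w) eps e0.
have [d d0 H] := IH d1 d10.
by exists d => // z zw; rewrite /piter !iterS; apply/H1/H.
Qed.

Lemma fixed_point_exists : exists k : C, p.[k] = k.
Proof.
have size_pX : size (p - 'X) != 1%N.
  by rewrite size_polyDl ?size_polyN ?size_polyX // gtn_eqF // ltnW.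
have [k] := closed_rootP _ size_pX.
by rewrite /root hornerD hornerN hornerX subr_eq0 => /eqP; exists k.
Qed.

Context {M : R}.
Hypothesis M_ge1 : 1 <= M.
Hypothesis M_escape : forall z, M <= normc z -> 2 * normc z <= normc p.[z].

Definition filled (z : C) : Prop := forall n, normc (piter n z) <= M.
Definition escapes (z : C) : Prop := exists n, M < normc (piter n z).
Definition boundary (z : C) : Prop := filled z /\
  forall rho : R, 0 < rho -> exists2 y, escapes y & normc (y - z) < rho.

Lemma not_filled_escapes z : ~ filled z -> escapes z.
Proof.
move=> notK; apply: contrapT => noesc; apply: notK => n.
by rewrite leNgt; apply/negP => Mn; apply: noesc; exists n.
Qed.

Lemma preimage_in_disc z : normc p.[z] <= M -> normc z <= M.
Proof.
move=> pzM; rewrite leNgt; apply/negP => Mz.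
by have := M_escape _ (ltW Mz); have := normc_ge0 z; lra.
Qed.

Lemma escape_doubling z n : M < normc (piter n z) ->
  forall m, 2 ^+ m * normc (piter n z) <= normc (piter (m + n) z).
Proof.
move=> Mn; elim=> [|m IH]; first by rewrite expr0 mul1r.
rewrite addSn /piter iterS -/(piter _ _) exprS -mulrA.
have m1 : 1 <= 2 ^+ m :> R by rewrite exprn_ege1 //; lra.
have outside : M <= normc (piter (m + n) z).
  by have := normc_ge0 (piter n z); nra.
by have := M_escape _ outside; lra.
Qed.

Lemma escape_unbounded z : escapes z -> forall B : R,
  exists n, B <= normc (piter n z).
Proof.
case=> n Mn B; set m := Num.Def.archi_bound `|B|.
exists (m + n)%N.
have Bm : `|B| < m%:R by apply: archi_boundP.
have m2m : (m%:R : R) <= 2 ^+ m by rewrite -natrX ler_nat ltnW // ltn_expl.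
have := escape_doubling _ _ Mn m.
have : (2 ^+ m : R) <= 2 ^+ m * normc (piter n z).
  by rewrite ler_peMr ?exprn_ge0 //; apply: le_trans M_ge1 (ltW Mn).
have := ler_norm B; lra.
Qed.

(* Boundary points of K are in the Julia set: arbitrarily close to a boundary
   point c some orbit leaves the disc of radius 2M, while the orbit of c stays
   in the disc of radius M, which is chordally far away. *)
Lemma boundary_julia c : boundary c -> julia_C p c.
Proof.
case=> Kc near_esc [U [_ Uc equi]].
have e0 : 0 < 1 / (2 * (1 + M)) by rewrite divr_gt0 //; have := M_ge1; lra.
have [d d0 equi_d] := equi _ Uc _ e0.
have [y esc_y yc] := near_esc (d / 2) (divr_gt0 d0 (ltr0Sn _ 1)).
have [n yn] := escape_unbounded _ esc_y (2 * M).
have cy : chordal (Some c) (Some y) < d.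
  apply: le_lt_trans (chordal_le _ _) _.
  by rewrite -normcN opprB; lra.
have := equi_d n (Some y) cy; rewrite !iterate_Some.
have := chordal_ge _ _ _ M_ge1 (Kc n) yn; lra.
Qed.

Lemma boundary_preimage c w : boundary c -> p.[w] = c -> boundary w.
Proof.
case=> Kc near_esc pw; split.
  case=> [|n]; last by rewrite piterSr pw; apply: Kc.
  by apply: preimage_in_disc; rewrite pw; exact: (Kc 0%N).
move=> rho rho0.
have a0 : 0 < normc (lead_coef p) by rewrite normc_gt0 lead_coef_p_neq0.
have [y [n esc_y] yc] := near_esc _ (mulr_gt0 a0 (exprn_gt0 (size p).-1 rho0)).
have [|r pr rw] := root_near y w rho rho0; first by rewrite pw -normcN opprB.
exists r => //; exists n.+1.
by rewrite piterSr pr.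
Qed.

Lemma filled_closed z :
  (forall d, 0 < d -> exists2 y, filled y & normc (y - z) < d) -> filled z.
Proof.
move=> approx n; rewrite leNgt; apply/negP => Mn.
have [d d0 cont] := piter_continuous n z (normc (piter n z) - M) ltac:(lra).
have [y Ky yz] := approx d d0.
have := cont y yz; have := normcB (piter n z) (piter n y).
rewrite -[piter n z - piter n y]opprB normcN.
by have := Ky n; lra.
Qed.

(* On a segment from a point k of K to a point e outside K, the last point
   of K is a boundary point of K (it exists since K is closed). *)
Lemma segment_boundary (k e : C) : filled k -> ~ filled e ->
  exists c, boundary c.
Proof.
move=> Kk notKe.
pose x (t : R) : C := k + t%:C * (e - k).
pose S : set R := fun t => 0 <= t <= 1 /\ filled (x t).
have S0 : S 0 by split; [rewrite lexx ler01 | rewrite /x mul0r addr0].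
have S_sup : has_sup S by split; [exists 0 | exists 1 => t [/andP[_ t1] _]].
set ts := sup S.
have ts0 : 0 <= ts := sup_upper_bound S_sup S0.
set D := normc (e - k).
have D0 : 0 <= D := normc_ge0 _.
have x_dist t s : normc (x t - x s) = `|t - s| * D.
  have -> : x t - x s = (t - s)%:C * (e - k) by rewrite /x rmorphB /=; ring.
  by rewrite normcM normc_real.
have Kts : filled (x ts).
  apply: filled_closed => d d0.
  have dD0 : 0 < d / (D + 1) by rewrite divr_gt0 //; lra.
  have [t St tsd] := sup_adherent dD0 S_sup; rewrite -/ts in tsd.
  have tts : t <= ts := sup_upper_bound S_sup St.
  have tsdD : (ts - t) * (D + 1) < d by rewrite -ltr_pdivlMr; lra.
  exists (x t); first exact: St.2.
  by rewrite x_dist ler0_norm; [nra | lra].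
have ts1 : ts < 1.
  rewrite lt_neqAle; apply/andP; split.
    apply/eqP => ts_eq1; apply: notKe.
    by move: Kts; rewrite ts_eq1 /x mul1r addrC subrK.
  by apply: ge_sup => [|t [/andP[_ t1] _]] //; exists 0.
exists (x ts); split => // rho rho0.
set eta := Num.min (1 - ts) (rho / (D + 1)).
have eta0 : 0 < eta by rewrite lt_min subr_gt0 ts1 divr_gt0 //; lra.
have eta1 : eta <= 1 - ts by rewrite ge_min lexx.
have etaD : eta * (D + 1) <= rho.
  by rewrite -ler_pdivlMr ?ge_min ?lexx ?orbT //; lra.
exists (x (ts + eta)).
  apply: not_filled_escapes => Kt.
  have St : S (ts + eta) by split => //; apply/andP; split; lra.
  by have := sup_upper_bound S_sup St; rewrite -/ts; lra.
by rewrite x_dist addrAC subrr add0r ger0_norm; nra.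
Qed.

(* Boundary points exist: join a fixed point of p, which lies in K, to the
   point M + 1, which does not. *)
Lemma boundary_exists : exists c, boundary c.
Proof.
have [k pk] := fixed_point_exists.
apply: (segment_boundary k (M + 1)%:C).
  have piter_k n : piter n k = k by elim: n => // n IH; rewrite piterSr pk.
  move=> n; rewrite piter_k leNgt; apply/negP => Mk.
  have := M_escape _ (ltW Mk); rewrite pk.
  by have := normc_ge0 k; have := M_ge1; lra.
move=> /(_ 0%N); rewrite -[piter 0 _]/((M + 1)%:C) normc_real.
rewrite ger0_norm ?gerDl ?ler10 //.
by rewrite addr_ge0 // (le_trans ler01 M_ge1).
Qed.

End Dynamics.

(* Critical points of p lie in the convex hull of its Julia set: they are
   critical points of p - c for a boundary point c of the filled Julia set,
   and all the roots of p - c lie in the Julia set. *)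
Theorem mainTheorem3 (R : realType) (p : {poly R[i]}) :
  (2 < size p)%N ->
  forall z : R[i], root p^`() z -> conv (julia_C p) z.
Proof.
move=> p_deg z crit_z.
have [M M_ge1 M_escape] := escape_radius p_deg.
have [c c_bd] := boundary_exists p_deg M_ge1 M_escape.
have size_q : (1 < size (p - c%:P)%R)%N.
  by rewrite (size_p_sub_const p_deg) ltnW.
have crit_q : root (p - c%:P)^`() z by rewrite derivB derivC subr0.
apply: (conv_sub _ (gauss_lucas _ _ size_q crit_q)) => r.
rewrite /root hornerD hornerN hornerC subr_eq0 => /eqP pr.
have r_bd := boundary_preimage p_deg M_escape c r c_bd pr.
exact: boundary_julia M_ge1 M_escape r r_bd.
Qed.
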